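(* Let $\mathcal{T}$ be a teacher class over $\mathcal{X},\mathcal{Y},\Phi$ and $H$ a non-empty history consistent with $\mathcal{T}$, and let $N$ be the number of labels $y\in\mathcal{Y}$ that do not appear in any pair of $H$. Then \[\mathrm{Ldim}(\mathrm{DtO}(\mathcal{T},H))\geq\mathrm{DFFdim}(\mathcal{T},H)-N.\]
   Context: Setting. A teacher over $\mathcal{X},\mathcal{Y},\Phi$ ($\mathcal{Y}$ finite, $\Phi$ a set of Boolean features on $\mathcal{X}$, $\bot$ a null symbol) is a pair $T=(\ell,\psi)$ with $\ell:\mathcal{X}\to\mathcal{Y}$ and $\psi:\mathcal{X}\times\mathcal{X}\to\Phi\cup\{\bot\}$ such that whenever $\ell(x)\neq\ell(\hat x)$, $\phi:=\psi(x,\hat x)\in\Phi$, $\phi(x)=1$ and $\phi(\hat x)=0$. A teacher class is a set of teachers. A history is a non-empty set $H\subseteq\mathcal{X}\times\mathcal{Y}$, $H_{\mathcal{X}}=\{x:\exists y,(x,y)\in H\}$; a teacher $(\ell,\psi)$ is consistent with $H$ if $\ell(x)=y$ for all $(x,y)\in H$; $\mathcal{T}_H$ is the set of teachers in $\mathcal{T}$ consistent with $H$, and $\mathcal{T}$ is consistent with $H$ if $\mathcal{T}_H\neq\emptyset$. DFF dimension. A DFF tree is a rooted tree whose nodes are triples $\langle y,\phi,x\rangle$ with $y\in\mathcal{Y}\cup\{\bot\}$, $\phi\in\Phi\cup\{\bot\}$, $x\in\mathcal{X}\cup\{\bot\}$, such that the root has $y=\phi=\bot$, a node has $x=\bot$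 iff it is a leaf, every edge is labeled by a pair $(\hat x,\hat y)\in\mathcal{X}\times\mathcal{Y}$, and every non-root node $\langle y,\phi,x\rangle$ with incoming edge $(\hat x,\hat y)$ has $\phi\neq\bot$ whenever $y\neq\hat y$. For a parent–child pair $\langle\cdot,\cdot,x\rangle\xrightarrow{(\hat x,\hat y)}\langle y,\phi,\cdot\rangle$ on a path, $(x,y)$ is called a labeled example in that path. A path from the root is consistent with a teacher $(\ell,\psi)$ if for every such parent–child pair on it, $\ell(x)=y$ and, if $y\neq\hat y$, $\psi(x,\hat x)=\phi$. Given $\mathcal{T}$ consistent with $H$, a DFF tree is shattered by $\mathcal{T}$ and $H$ if: (1) every non-root node $\langle y,\phi,x\rangle$ with incoming edge $(\hat x,\hat y)$ has $y\neq\hat y$; (2) the labels of the outgoing edges of each non-leaf node $v$ are exactly the pairs that belong to $H$ or are labeled examples in the path from the root to $v$; (3) every root-to-leaf path is consistent with some teacher in $\mathcal{T}_H$; (4) all root-to-leaf paths have the same number of edges, called the height. $\mathrm{DFFdim}(\mathcal{T},H)$ is the maximal height of a DFF tree shattered by $\mathcal{T}$ and $H$. $\mathrm{Ldim}$ is the (multiclass) Littlestone dimension: the maximal depth of a complete binary tree whose internal nodes are labeled by examples and whose two outgoing edges at each internal node are labeled by two distinct labels, such that for every root-to-leaf path some function in the class agrees with all (example, edge label) pairs on the path. Mapping DtO: given $\mathcal{T}$ and $H$, let $\mathcal{X}''=\mathcal{X}\setminus H_{\mathcal{X}}$; then $\mathrm{DtO}(\mathcal{T},H)=\{\ell|_{\mathcal{X}''}:(\ell,\psi)\in\mathcal{T}\}$.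 *)

From mathcomp Require Import all_boot.
From mathcomp Require Import boolp.
From Stdlib Require List.

Unset Printing Implicit Defensive.

(* Teachers.  Phi is the set of Boolean features (a set of functions
   X -> bool); the null symbol bot is encoded as None.              *)

Definition teacher (X : Type) (Y : Type) :=
  ((X -> Y) * (X -> X -> option (X -> bool)))%type.

Definition is_teacher {X : Type} {Y : Type} (Phi : (X -> bool) -> Prop)
  (T : teacher X Y) : Prop :=
  forall x xh : X, T.1 x <> T.1 xh ->
    exists phi, T.2 x xh = Some phi /\ Phi phi /\ phi x = true /\ phi xh = false.

Definition consistent {X : Type} {Y : Type} (T : teacher X Y)
  (H : X * Y -> Prop) : Prop :=
  forall x y, H (x, y) -> T.1 x = y.

Definition restrict {X : Type} {Y : Type} (TC : teacher X Y -> Prop)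
  (H : X * Y -> Prop) : teacher X Y -> Prop :=
  fun T => TC T /\ consistent T H.

(* DFF trees.  A node is a triple <y, phi, x> (each component optional,
   None = bot) together with its children, indexed by the label
   (xh, yh) of the outgoing edge (None = no edge with that label).   *)

Inductive dfftree (X : Type) (Y : Type) : Type :=
  DNode : option Y -> option (X -> bool) -> option X ->
          (X * Y -> option (dfftree X Y)) -> dfftree X Y.
Arguments DNode {X Y}.

Definition tval {X Y} (t : dfftree X Y) := let: DNode y _ _ _ := t in y.
Definition tphi {X Y} (t : dfftree X Y) := let: DNode _ f _ _ := t in f.
Definition tx {X Y} (t : dfftree X Y) := let: DNode _ _ x _ := t in x.
Definition tch {X Y} (t : dfftree X Y) := let: DNode _ _ _ c := t in c.

(* A step of a path from the root: (x, (xh, yh), y, phi) records a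
   parent <.,.,x>, the edge label (xh, yh) and the child's <y, phi, .>. *)
Definition step (X : Type) (Y : Type) :=
  (X * (X * Y) * option Y * option (X -> bool))%type.

Inductive reach (X : Type) (Y : Type) :
    dfftree X Y -> seq (step X Y) -> dfftree X Y -> Prop :=
| reach_nil t : reach X Y t [::] t
| reach_cons t e t1 p t2 x :
    tx t = Some x -> tch t e = Some t1 -> reach X Y t1 p t2 ->
    reach X Y t ((x, e, tval t1, tphi t1) :: p) t2.
Arguments reach {X Y}.
Arguments reach_nil {X Y}.
Arguments reach_cons {X Y}.

Definition lab_ex {X : Type} {Y : Type} (p : seq (step X Y)) (e : X * Y) : Prop :=
  exists eh f, List.In (e.1, eh, Some e.2, f) p.

Definition is_leaf {X : Type} {Y : Type} (v : dfftree X Y) : Prop :=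
  forall e, tch v e = None.

Definition dff_tree_wf {X : Type} {Y : Type} (Phi : (X -> bool) -> Prop)
  (t : dfftree X Y) : Prop :=
  [/\ tval t = None, tphi t = None,
      (forall f, tphi t = Some f -> Phi f),
      (forall p v, reach t p v -> (tx v = None <-> is_leaf v)) &
      (forall p v, reach t p v -> forall x e y f, List.In (x, e, y, f) p ->
         (forall g, f = Some g -> Phi g) /\ (y <> Some e.2 -> f <> None))].

Definition path_consistent {X : Type} {Y : Type} (T : teacher X Y)
  (p : seq (step X Y)) : Prop :=
  forall x e y f, List.In (x, e, y, f) p ->
    y = Some (T.1 x) /\ (y <> Some e.2 -> T.2 x e.1 = f).

Definition dff_shattered {X : Type} {Y : Type} (Phi : (X -> bool) -> Prop)
  (TC : teacher X Y -> Prop) (H : X * Y -> Prop) (t : dfftree X Y) (d : nat)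
  : Prop :=
  [/\ dff_tree_wf Phi t,
      (* (1) *)
      (forall p v, reach t p v -> forall x e y f, List.In (x, e, y, f) p ->
          y <> Some e.2),
      (forall p v x, reach t p v -> tx v = Some x ->
          forall e, tch v e <> None <-> (H e \/ lab_ex p e)),
      (forall p v, reach t p v -> is_leaf v ->
          exists T, restrict TC H T /\ path_consistent T p) &
      (forall p v, reach t p v -> is_leaf v -> size p = d)].

Definition DFFdim_ge {X : Type} {Y : Type} (Phi : (X -> bool) -> Prop)
  (TC : teacher X Y -> Prop) (H : X * Y -> Prop) (d : nat) : Prop :=
  exists t, dff_shattered Phi TC H t d.

(* binary trees: internal node = example z with the two edge labels *)
Inductive ltree (Z : Type) (Y : Type) : Type :=
| LLeaf : ltree Z Y
| LNode : Z -> Y -> Y -> ltree Z Y -> ltree Z Y -> ltree Z Y.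
Arguments LLeaf {Z Y}.
Arguments LNode {Z Y}.

Fixpoint lshattered {Z : Type} {Y : Type} (C : (Z -> Y) -> Prop)
  (t : ltree Z Y) (d : nat) : Prop :=
  match t, d with
  | LLeaf, 0 => exists h, C h
  | LNode z y0 y1 l r, d'.+1 =>
      y0 <> y1 /\
      lshattered (fun h => C h /\ h z = y0) l d' /\
      lshattered (fun h => C h /\ h z = y1) r d'
  | _, _ => False
  end.

Definition Ldim_ge {Z : Type} {Y : Type} (C : (Z -> Y) -> Prop) (d : nat) : Prop :=
  exists t, lshattered C t d.

Definition Xpp {X : Type} {Y : Type} (H : X * Y -> Prop) : Type :=
  {x : X | ~ exists y, H (x, y)}.

Definition DtO {X : Type} {Y : Type} (TC : teacher X Y -> Prop)
  (H : X * Y -> Prop) : (Xpp H -> Y) -> Prop :=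
  fun g => exists T, TC T /\ g = (fun z : Xpp H => T.1 (proj1_sig z)).

Definition missing_labels {X : Type} {Y : finType} (H : X * Y -> Prop) : nat :=
  #|[pred y : Y | ~~ `[< exists x, H (x, y) >]]|.

(* Walk down a shattered DFF tree, keeping the class of restrictions to
   X \ H_X of the teachers consistent with the path so far.  The example x at
   an internal node is not in H_X: the edge labelled by a history pair (x, y)
   would lead to a child labelled y, which condition (1) forbids.  Either two
   children give x different labels, and x splits the class as in a Littlestone
   tree, or all children give x the same label y; then y occurs neither in H nor
   among the labelled examples of the path (the corresponding edge would again
   violate (1)), so the number of labels not seen yet drops by one.  Each level
   of the DFF tree is thus paid for by a Littlestone level or by an unseen
   label. *)

From mathcomp Require Import all_boot.
From mathcomp Require Import boolp.
From mathcomp Require Import zify.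

(* The generated [dfftree_ind] gives no induction hypothesis for children. *)
Fixpoint dfftree_ind_children {X Y : Type} (P : dfftree X Y -> Prop)
  (f : forall y ph x c, (forall e t', c e = Some t' -> P t') -> P (DNode y ph x c))
  (t : dfftree X Y) {struct t} : P t :=
  match t with DNode y ph x c =>
    f y ph x c (fun e t' Heq =>
      match c e as o return o = Some t' -> P t' with
      | Some s => fun h => eq_ind s P (dfftree_ind_children P f s) t' (Some_inj h)
      | None => fun h => False_ind _ (ltac:(discriminate h))
      end Heq)
  end.

Lemma In_cat {A : Type} (a : A) (p q : seq A) :
  List.In a (p ++ q) <-> List.In a p \/ List.In a q.
Proof.
elim: p => [|b p IH] /=; first by split; [right|case].
rewrite IH; tauto.
Qed.

Lemma In_rcons_last {A : Type} (p : seq A) (a : A) : List.In a (p ++ [:: a]).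
Proof. by apply/In_cat; right; left. Qed.

Section Littlestone.
Context {Z Y : Type}.
Implicit Types (C : (Z -> Y) -> Prop) (t : ltree Z Y).

Lemma lshattered_nonempty C t n : lshattered C t n -> exists h, C h.
Proof.
elim: t C n => [|z y0 y1 l IHl r IHr] C [|n] //= [_ [/IHl [h [Ch _]] _]].
by exists h.
Qed.

Lemma lshattered_sub C C' t n :
  (forall h, C h -> C' h) -> lshattered C t n -> lshattered C' t n.
Proof.
elim: t C C' n => [|z y0 y1 l IHl r IHr] C C' [|n] //= CC'.
  by move=> [h /CC' ?]; exists h.
move=> [y01 [hl hr]]; split=> //.
by split; [apply: IHl hl | apply: IHr hr] => h [/CC'].
Qed.

Lemma Ldim_ge_sub {C C' n} :
  (forall h, C h -> C' h) -> Ldim_ge C n -> Ldim_ge C' n.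
Proof. by move=> CC' [t ht]; exists t; apply: lshattered_sub ht. Qed.

Lemma Ldim_ge_leq {C n m} : Ldim_ge C n -> m <= n -> Ldim_ge C m.
Proof.
move=> [t]; elim: t C n m => [|z y0 y1 l IHl r IHr] C [|n] [|m] //=.
- by move=> ? _; exists LLeaf.
- by move=> /(@lshattered_nonempty _ (LNode z y0 y1 l r) n.+1) ? _; exists LLeaf.
move=> [y01 [/IHl hl /IHr hr]] mn.
have [[tl htl] [tr htr]] := (hl m mn, hr m mn).
by exists (LNode z y0 y1 tl tr).
Qed.

Lemma Ldim_ge_node C z y0 y1 n : y0 <> y1 ->
  Ldim_ge (fun h => C h /\ h z = y0) n -> Ldim_ge (fun h => C h /\ h z = y1) n ->
  Ldim_ge C n.+1.
Proof. by move=> y01 [tl htl] [tr htr]; exists (LNode z y0 y1 tl tr). Qed.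

End Littlestone.

Lemma reach_cat {X Y : Type} {t v w : dfftree X Y} {p q} :
  reach t p v -> reach v q w -> reach t (p ++ q) w.
Proof.
elim=> [//|t0 e t1 p0 t2 x hx hc _ IH] /IH.
exact: reach_cons hx hc.
Qed.

Lemma reach_child {X Y : Type} {t v c : dfftree X Y} {p x e} :
  reach t p v -> tx v = Some x -> tch v e = Some c ->
  reach t (p ++ [:: (x, e, tval c, tphi c)]) c.
Proof.
by move=> hr hx hc; apply: reach_cat hr (reach_cons _ _ _ _ _ _ hx hc (reach_nil _)).
Qed.

Lemma lab_ex_cat {X Y : Type} (p s : seq (step X Y)) e :
  lab_ex p e -> lab_ex (p ++ s) e.
Proof. by move=> [eh [f hin]]; exists eh, f; apply/In_cat; left. Qed.

Lemma path_consistent_cat {X Y : Type} (T : teacher X Y) p s :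
  path_consistent T (p ++ s) -> path_consistent T p.
Proof. by move=> hpc x e y f hin; apply: hpc; apply/In_cat; left. Qed.

Definition unseen {X Y : Type} (H : X * Y -> Prop) (p : seq (step X Y)) : pred Y :=
  [pred y | ~~ `[< exists x, H (x, y) \/ lab_ex p (x, y) >]].

Lemma unseen_cat {X Y : Type} (H : X * Y -> Prop) p s :
  {subset unseen H (p ++ s) <= unseen H p}.
Proof.
move=> y /asboolPn hn; apply/asboolPn => -[x hx]; apply: hn; exists x.
by case: hx => [?|/lab_ex_cat]; [left|right].
Qed.

Lemma card_unseen_cat {X : Type} {Y : finType} (H : X * Y -> Prop) p s :
  #|unseen H (p ++ s)| <= #|unseen H p|.
Proof. by apply/subset_leq_card/subsetP/unseen_cat. Qed.

Lemma card_unseen_cat_lt {X : Type} {Y : finType} {H : X * Y -> Prop} {p s x y} :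
  y \in unseen H p -> lab_ex (p ++ s) (x, y) ->
  #|unseen H (p ++ s)| < #|unseen H p|.
Proof.
move=> yp yps; apply/proper_card/properP; split; first exact/subsetP/unseen_cat.
by exists y => //; apply/negPn/asboolP; exists x; right.
Qed.

Lemma card_unseen_nil {X : Type} {Y : finType} (H : X * Y -> Prop) :
  #|unseen H [::]| = missing_labels H.
Proof.
apply: eq_card => y; rewrite !inE; congr (~~ _); apply/asboolP/asboolP.
  by case=> x [?|[? [? []]]]; exists x.
by case=> x ?; exists x; left.
Qed.

Definition path_class {X Y : Type} (TC : teacher X Y -> Prop)
  (H : X * Y -> Prop) (p : seq (step X Y)) : (Xpp H -> Y) -> Prop :=
  fun h => exists T, restrict TC H T /\ path_consistent T p /\
     h = (fun z : Xpp H => T.1 (sval z)).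

Lemma path_class_cat {X Y : Type} TC (H : X * Y -> Prop) p s h :
  path_class TC H (p ++ s) h -> path_class TC H p h.
Proof. by move=> [T [hT [/path_consistent_cat hpc ->]]]; exists T. Qed.

Lemma path_class_nil_DtO {X Y : Type} TC (H : X * Y -> Prop) h :
  path_class TC H [::] h -> DtO TC H h.
Proof. by move=> [T [[hT _] [_ ->]]]; exists T. Qed.

Lemma path_class_rcons {X Y : Type} {TC} {H : X * Y -> Prop} {p x e y f h} (z : Xpp H) :
  sval z = x -> path_class TC H (p ++ [:: (x, e, Some y, f)]) h ->
  path_class TC H p h /\ h z = y.
Proof.
move=> zx hh; split; first exact: path_class_cat hh.
case: hh => T [_ [hpc ->]] /=; rewrite zx.
by case: (hpc _ _ _ _ (In_rcons_last _ _)) => -[].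
Qed.

Section ShatteredTree.
Context {X Y : Type} {Phi : (X -> bool) -> Prop} {TC : teacher X Y -> Prop}.
Context {H : X * Y -> Prop} {t : dfftree X Y} {d : nat}.
Hypothesis shattered : dff_shattered Phi TC H t d.
Implicit Types (p : seq (step X Y)) (v : dfftree X Y).

Lemma reach_internal {p v} : reach t p v -> ~ is_leaf v -> exists x, tx v = Some x.
Proof.
case: shattered => -[_ _ _ leafP _] _ _ _ _ /leafP leafP' nleaf.
case: (tx v) leafP' => [x|] leafP'; first by exists x.
by case: nleaf; apply/leafP'.
Qed.

Lemma reach_leaf {p v} : reach t p v -> exists q w, reach v q w /\ is_leaf w.
Proof.
elim/(@dfftree_ind_children X Y): v p => y ph ox c IH p hr.
have [leaf|nleaf] := pselect (is_leaf (DNode y ph ox c)).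
  by exists [::], (DNode y ph ox c); split=> //; exact: reach_nil.
have [x hx] := reach_internal hr nleaf.
have [e ce] : exists e, c e <> None.
  by apply: contrapT => nc; apply: nleaf => e /=; apply: contrapT => ?; apply: nc; exists e.
case E: (c e) ce => [c1|] // _.
have [q [w [hq leaf]]] := IH e c1 E _ (reach_child hr hx E).
by exists ((x, e, tval c1, tphi c1) :: q), w; split=> //; exact: reach_cons.
Qed.

Lemma reach_consistent {p v} : reach t p v ->
  exists T, restrict TC H T /\ path_consistent T p.
Proof.
move=> hr; have [q [w [hq leaf]]] := reach_leaf hr.
case: shattered => _ _ _ consistentP _.
have [T [hT /path_consistent_cat hpc]] := consistentP _ _ (reach_cat hr hq) leaf.
by exists T.
Qed.

Section Child.
Context {p : seq (step X Y)} {v : dfftree X Y} {x : X}.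
Hypotheses (hr : reach t p v) (hx : tx v = Some x).

Lemma child_label {e c} : tch v e = Some c ->
  exists T, restrict TC H T /\ path_consistent T (p ++ [:: (x, e, tval c, tphi c)])
            /\ tval c = Some (T.1 x).
Proof.
move=> hc; have [T [hT hpc]] := reach_consistent (reach_child hr hx hc).
by exists T; split=> //; split=> //; case: (hpc _ _ _ _ (In_rcons_last _ _)).
Qed.

Lemma child_label_neq {e c} : tch v e = Some c -> tval c <> Some e.2.
Proof.
move=> hc; case: shattered => _ differP _ _ _.
exact: differP (reach_child hr hx hc) _ _ _ _ (In_rcons_last _ _).
Qed.

Lemma child_of_seen {e} : H e \/ lab_ex p e -> exists c, tch v e = Some c.
Proof.
case: shattered => _ _ edgeP _ _ /(edgeP _ _ _ hr hx).
by case: (tch v e) => [c|] // _; exists c.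
Qed.

Lemma node_example_fresh : ~ exists y, H (x, y).
Proof.
move=> [y hxy]; have [c hc] := child_of_seen (or_introl hxy).
have [T [[_ consH] [_ cy]]] := child_label hc.
by apply: (child_label_neq hc); rewrite cy (consH _ _ hxy).
Qed.

Lemma uniform_children_label_unseen {e0 c0 ys} :
  tch v e0 = Some c0 -> tval c0 = Some ys ->
  (forall e c, tch v e = Some c -> tval c = tval c0) -> ys \in unseen H p.
Proof.
move=> hc0 c0ys uniform; apply/asboolPn => -[x' /child_of_seen [c hc]].
by apply: (child_label_neq hc); rewrite (uniform _ _ hc) c0ys.
Qed.

Lemma Ldim_ge_split_children {e1 e2 c1 c2 n} :
  tch v e1 = Some c1 -> tch v e2 = Some c2 -> tval c1 <> tval c2 ->
  Ldim_ge (path_class TC H (p ++ [:: (x, e1, tval c1, tphi c1)])) n ->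
  Ldim_ge (path_class TC H (p ++ [:: (x, e2, tval c2, tphi c2)])) n ->
  Ldim_ge (path_class TC H p) n.+1.
Proof.
move=> hc1 hc2 c12; pose z : Xpp H := exist _ x node_example_fresh.
have [T1 [_ [_ l1]]] := child_label hc1; have [T2 [_ [_ l2]]] := child_label hc2.
rewrite l1 l2 => L1 L2; apply: (Ldim_ge_node _ z (T1.1 x) (T2.1 x)).
- by move=> e12; apply: c12; rewrite l1 l2 e12.
- exact: Ldim_ge_sub (fun h => path_class_rcons z erefl) L1.
- exact: Ldim_ge_sub (fun h => path_class_rcons z erefl) L2.
Qed.

End Child.
End ShatteredTree.

Section LdimBound.
Context {X : Type} {Y : finType} {Phi : (X -> bool) -> Prop}.
Context {TC : teacher X Y -> Prop} {H : X * Y -> Prop} {t : dfftree X Y} {d : nat}.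
Hypotheses (shattered : dff_shattered Phi TC H t d) (H_nonempty : exists e, H e).

Lemma Ldim_path_class {p v} : reach t p v ->
  Ldim_ge (path_class TC H p) (d - size p - #|unseen H p|).
Proof.
elim/(@dfftree_ind_children X Y): v p => y ph ox c IH p hr.
set v := DNode y ph ox c in hr.
case n_eq: (d - size p - #|unseen H p|) => [|n].
  have [T [hT hpc]] := reach_consistent shattered hr.
  by exists LLeaf, (fun z => T.1 (sval z)), T.
have [leaf|nleaf] := pselect (is_leaf v).
  by case: shattered n_eq => _ _ _ _ /(_ _ _ hr leaf) ->; rewrite subnn.
have [x hx] := reach_internal shattered hr nleaf.
pose ext e c0 := p ++ [:: (x, e, tval c0, tphi c0)].
have IHc e c0 : c e = Some c0 ->
    Ldim_ge (path_class TC H (ext e c0)) (d - size p - 1 - #|unseen H (ext e c0)|).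
  by move=> hc; have := IH e c0 hc _ (reach_child hr hx hc); rewrite size_cat subnDA.
have [[e1 [e2 [c1 [c2 [hc1 [hc2 c12]]]]]] | uniform] := pselect
  (exists e1 e2 c1 c2, c e1 = Some c1 /\ c e2 = Some c2 /\ tval c1 <> tval c2).
- have child_bound e c0 : c e = Some c0 ->
      Ldim_ge (path_class TC H (ext e c0)) n.
    move=> hc; apply: Ldim_ge_leq (IHc _ _ hc) _.
    by have := card_unseen_cat H p [:: (x, e, tval c0, tphi c0)]; rewrite /ext; lia.
  exact: (Ldim_ge_split_children shattered hr hx hc1 hc2 c12
            (child_bound _ _ hc1) (child_bound _ _ hc2)).
- (* A history pair labels an edge, so [v] has a child. *)
  have [e0 He0] := H_nonempty.
  have [c0 hc0] := child_of_seen shattered hr hx (or_introl He0).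
  have [T0 [_ [_ l0]]] := child_label shattered hr hx hc0.
  have same_label e c' : c e = Some c' -> tval c' = tval c0.
    by move=> hc'; apply: contrapT => neq; apply: uniform; exists e, e0, c', c0.
  have unseen0 := uniform_children_label_unseen shattered hr hx hc0 l0 same_label.
  have /(card_unseen_cat_lt unseen0) lt : lab_ex (ext e0 c0) (x, T0.1 x).
    by exists e0, (tphi c0); rewrite -l0; exact: In_rcons_last.
  apply: Ldim_ge_sub (@path_class_cat _ _ _ _ _ _) (Ldim_ge_leq (IHc _ _ hc0) _).
  by move: lt n_eq; rewrite /ext; lia.
Qed.

End LdimBound.

Theorem mainTheorem10 (X : Type) (Y : finType) (Phi : (X -> bool) -> Prop)
  (TC : teacher X Y -> Prop) (H : X * Y -> Prop)
  (hTC : forall T, TC T -> is_teacher Phi T)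
  (hH : exists p, H p)
  (hcons : exists T, restrict TC H T)
  (d : nat) :
  DFFdim_ge Phi TC H d -> Ldim_ge (DtO TC H) (d - missing_labels H).
Proof.
move=> [t shattered].
have := Ldim_path_class shattered hH (reach_nil t).
rewrite subn0 card_unseen_nil; apply: Ldim_ge_sub.
exact: path_class_nil_DtO.
Qed.
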